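(* Let $\psi_n,\psi^*_n$ ($n\in\mathbb{Z}$) satisfy the canonical anticommutation relations $[\psi^*_m,\psi^*_n]_+=[\psi_m,\psi_n]_+=0$, $[\psi^*_m,\psi_n]_+=\delta_{mn}$. Let $\gamma_n\ge0$ ($n\in\mathbb{Z}$) with only finitely many nonzero and $S_n=\sinh\gamma_n<1$, $C_n=\cosh\gamma_n$. Define $H_{mn}=\psi_n\psi^*_m+(-1)^{m-n+1}\psi_m\psi^*_n$ for $m>n$, $$\mathcal H=\sum_{m>n}(-1)^{m-n}C_mS_{m-1}\cdots S_{n+1}C_nH_{mn},$$ $$\phi(\theta)=\sum_nC_ne^{in\theta}\prod_{j\le n-1}(1+S_je^{-i\theta})\prod_{j\ge n+1}(1-S_je^{i\theta})\,\psi_n,\qquad \phi^*(\theta)=\sum_nC_ne^{-in\theta}\prod_{j\le n-1}(1-S_je^{i\theta})\prod_{j\ge n+1}(1+S_je^{-i\theta})\,\psi^*_n .$$ Then $$[\mathcal H,\phi(\theta)]=-(e^{i\theta}+e^{-i\theta})\phi(\theta),\qquad[\mathcal H,\phi^*(\theta)]=(e^{i\theta}+e^{-i\theta})\phi^*(\theta),$$ $$[\phi^*(\theta_1),\phi(\theta_2)]_+=\prod_j(1+S_je^{-i\theta_1})(1-S_je^{i\theta_1})\sum_{k\in\mathbb Z}e^{ik(\theta_1-\theta_2)}.$$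
   Context: The infinite sums are formal linear combinations of the $\psi_n,\psi^*_n$ (respectively of bilinears), and commutators and anticommutators are computed termwise using the anticommutation relations; the last identity is an identity of formal Fourier series in $\theta_1,\theta_2$. Products over $j$ are finite since $S_j=0$ for all but finitely many $j$. *)

From HB Require Import structures.
From mathcomp Require Import all_boot all_order all_algebra.
From mathcomp Require Import all_classical all_reals all_analysis.
From mathcomp Require Import complex.

Set Implicit Arguments.
Unset Strict Implicit.
Unset Printing Implicit Defensive.

Import Order.TTheory GRing.Theory Num.Theory.
Local Open Scope classical_set_scope.
Local Open Scope ring_scope.
Local Open Scope complex_scope.

(* Justification of the termwise structure constants used below:           *)
(* in ANY ring containing elements psi n, psis n (n : int) satisfying the   *)
(* canonical anticommutation relations, the commutators of a bilinear       *)
(* psi_a psi*_b with a generator are again generators.                      *)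

Definition CAR (A : pzRingType) (psi psis : int -> A) : Prop :=
  forall m n : int,
    [/\ psis m * psis n + psis n * psis m = 0,
        psi m * psi n + psi n * psi m = 0 &
        psis m * psi n + psi n * psis m = (m == n)%:R].

Lemma CAR_comm_psi (A : pzRingType) (psi psis : int -> A) :
  CAR psi psis -> forall a b k : int,
  psi a * psis b * psi k - psi k * (psi a * psis b) = (b == k)%:R * psi a.
Proof.
move=> H a b k.
have [_ Hpp Hsp] := H b k.
have [_ Hpp' _] := H k a.
have E1 : psis b * psi k = (b == k)%:R - psi k * psis b.
  by rewrite -Hsp addrK.
have E2 : psi k * psi a = - (psi a * psi k).
  by apply/eqP; rewrite -subr_eq0 opprK Hpp'.
rewrite -mulrA E1 mulrBr mulr_natr mulr_natl [psi k * (_ * _)]mulrA E2 mulNr mulrA.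
by rewrite opprK subrK.
Qed.

Lemma CAR_comm_psis (A : pzRingType) (psi psis : int -> A) :
  CAR psi psis -> forall a b k : int,
  psi a * psis b * psis k - psis k * (psi a * psis b) = - ((a == k)%:R * psis b).
Proof.
move=> H a b k.
have [Hss _ _] := H b k.
have [_ _ Hsp] := H k a.
have E1 : psis k * psi a = (k == a)%:R - psi a * psis k.
  by rewrite -Hsp addrK.
have E2 : psis b * psis k = - (psis k * psis b).
  by apply/eqP; rewrite -subr_eq0 opprK Hss.
rewrite [psis k * _]mulrA E1 mulrBl eq_sym -mulrA E2 mulrN mulrA.
by rewrite opprB addrA addNr add0r.
Qed.

(* Formal (possibly infinite) linear combinations of the generators and of  *)
(* the bilinears psi_a psi*_b, with termwise (anti)commutators computed     *)
(* with the structure constants above.  All sums are finitely supported     *)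
(* sums (fsbigop); in every use below only finitely many terms are nonzero. *)

(* sum_n cpsi n psi_n + sum_n cpsis n psi*_n *)
Record flin (K : Type) := FLin { cpsi : int -> K ; cpsis : int -> K }.

(* sum_{a,b} X a b psi_a psi*_b *)
Definition fbil (K : Type) := int -> int -> K.

Definition fscale (K : pzRingType) (c : K) (v : flin K) : flin K :=
  FLin (fun n => c * cpsi v n) (fun n => c * cpsis v n).

(* [X, v] termwise, using [psi_a psi*_b, psi_k] = delta_{bk} psi_a and
   [psi_a psi*_b, psi*_k] = - delta_{ak} psi*_b *)
Definition fcomm (K : pzRingType) (X : fbil K) (v : flin K) : flin K :=
  FLin (fun a => \sum_(b \in [set: int]) X a b * cpsi v b)
       (fun b => - \sum_(a \in [set: int]) X a b * cpsis v a).

(* [u, v]_+ termwise, using the CAR; a scalar *)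
Definition facomm (K : pzRingType) (u v : flin K) : K :=
  \sum_(n \in [set: int]) (cpsis u n * cpsi v n + cpsi u n * cpsis v n).

Definition sinhR (R : realType) (x : R) : R := (expR x - expR (- x)) / 2.
Definition coshR (R : realType) (x : R) : R := (expR x + expR (- x)) / 2.

Definition expi (R : realType) (x : R) : R[i] := Complex (cos x) (sin x).

Section Objects.
Variables (R : realType) (gamma : int -> R).

Definition Sg (n : int) : R[i] := (sinhR (gamma n))%:C.
Definition Cg (n : int) : R[i] := (coshR (gamma n))%:C.

Definition Hmn (m n : int) : fbil R[i] := fun a b =>
  ((a == n) && (b == m))%:R + (-1) ^ (m - n + 1) * ((a == m) && (b == n))%:R.

Definition hcoef (m n : int) : R[i] :=
  (-1) ^ (m - n) * Cg m *
  (\big[*%R/1]_(j \in [set j : int | (n < j)%R && (j < m)%R]) Sg j) * Cg n.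

Definition calH : fbil R[i] := fun a b =>
  \sum_(mn \in [set mn : int * int | (mn.2 < mn.1)%R])
     hcoef mn.1 mn.2 * Hmn mn.1 mn.2 a b.

Definition phi_coef (theta : R) (n : int) : R[i] :=
  Cg n * expi (n%:~R * theta) *
  (\big[*%R/1]_(j \in [set j : int | (j <= n - 1)%R]) (1 + Sg j * expi (- theta))) *
  (\big[*%R/1]_(j \in [set j : int | (n + 1 <= j)%R]) (1 - Sg j * expi theta)).

Definition phis_coef (theta : R) (n : int) : R[i] :=
  Cg n * expi (- (n%:~R * theta)) *
  (\big[*%R/1]_(j \in [set j : int | (j <= n - 1)%R]) (1 - Sg j * expi theta)) *
  (\big[*%R/1]_(j \in [set j : int | (n + 1 <= j)%R]) (1 + Sg j * expi (- theta))).

Definition phi (theta : R) : flin R[i] := FLin (phi_coef theta) (fun _ => 0).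
Definition phis (theta : R) : flin R[i] := FLin (fun _ => 0) (phis_coef theta).

Definition Pprod (theta : R) : R[i] :=
  \big[*%R/1]_(j \in [set: int])
     ((1 + Sg j * expi (- theta)) * (1 - Sg j * expi theta)).

End Objects.

Definition trig_coeffs (R : realType) (c : int -> R[i]) (f : R -> R[i]) : Prop :=
  finite_set [set k : int | c k != 0] /\
  forall x : R, f x = \sum_(k \in [set: int]) c k * expi (k%:~R * x).

(* The formal two-variable series sum_{k in Z} e^{i k (theta1 - theta2)}:
   coefficient of e^{i (p theta1 + q theta2)}. *)
Definition delta_series (R : realType) (p q : int) : R[i] :=
  if p + q == 0 then 1 else 0.

(* coefficient of e^{i (p theta1 + q theta2)} in P(theta1) * D(theta1, theta2),
   for P a trigonometric polynomial with coefficients cP and D a formal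
   two-variable series with coefficients d *)
Definition tp_mul_series (R : realType) (cP : int -> R[i]) (d : int -> int -> R[i])
  (p q : int) : R[i] :=
  \sum_(r \in [set: int]) cP r * d (p - r) q.

(* Write z = e^{i theta}.  The coefficient of psi_n in phi(theta) is
   C_n z^n A_n B_n with A_n = prod_{j<n} (1 + S_j / z) and
   B_n = prod_{j>n} (1 - S_j z); the coefficient of psi*_n in phi*(theta) is the
   same expression for (-S, 1/z), and this substitution transposes the matrix of
   calH, so the second identity follows from the first.
   In row a, the matrix of calH splits into its parts below and above the
   diagonal.  Their products with phi are partial sums satisfying first-order
   recurrences in a, whose solutions -z^(a-1) A_a B_(a-1) and -z^(a+1) A_(a+1) B_a
   follow from C_a^2 = 1 + S_a^2; they add up to -(z + 1/z) C_a z^a A_a B_a.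
   For the anticommutator, (z + S_n) phi_n C_(n+1) = (1 - S_(n+1) z) phi_(n+1) C_n
   and its analogue for phi* give two-term recurrences in n for the Fourier
   coefficients, under which sum_n b_n(p) a_n(q) telescopes and so depends only
   on p + q.  Moving q far down leaves only indices n below the support of gamma,
   where the coefficients are translates of those at a single index n0, and the
   sum becomes the convolution of the coefficients of phi*_n0 phi_n0 = P. *)

From HB Require Import structures.
From mathcomp Require Import all_boot all_order all_algebra.
From mathcomp Require Import all_classical all_reals all_analysis.
From mathcomp Require Import complex.
From mathcomp Require Import zify ring lra.
Import Order.TTheory GRing.Theory Num.Theory.
Local Open Scope classical_set_scope.
Local Open Scope ring_scope.
Set Implicit Arguments.
Unset Strict Implicit.
Unset Printing Implicit Defensive.

Section FinSupport.
Variables (K : Type) (idx : K) (op : Monoid.com_law idx) (I : choiceType).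
Implicit Types (A : set I) (F G : I -> K).

Lemma fsbig_restrict_supp A F (D : set I) :
  F @^-1` [set~ idx] `<=` D ->
  \big[op/idx]_(j \in A) F j = \big[op/idx]_(j \in A `&` D) F j.
Proof.
move=> FD; apply/esym/fsbig_widen => [j []//|j [Aj /not_andP [//|Dj]]].
by apply: contrapT => Fj; apply: Dj; exact: FD.
Qed.

Lemma fsbigD1_supp A F x :
  finite_set (F @^-1` [set~ idx]) -> A x ->
  \big[op/idx]_(j \in A) F j = op (F x) (\big[op/idx]_(j \in A `\ x) F j).
Proof.
move=> finF Ax; pose D := F @^-1` [set~ idx] `|` [set x].
have finD : finite_set D by rewrite finite_setU; split; last exact: finite_set1.
have FD : F @^-1` [set~ idx] `<=` D by move=> j; left.
rewrite (fsbig_restrict_supp A FD) (fsbigD1 x) //; last by split; [|right].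
  by rewrite -setIDA -setIDAC -(fsbig_restrict_supp _ FD).
exact: finite_setIr.
Qed.

Lemma fsbig_split_supp A F G :
  finite_set (F @^-1` [set~ idx]) -> finite_set (G @^-1` [set~ idx]) ->
  \big[op/idx]_(j \in A) op (F j) (G j) =
  op (\big[op/idx]_(j \in A) F j) (\big[op/idx]_(j \in A) G j).
Proof.
move=> finF finG; pose D := F @^-1` [set~ idx] `|` G @^-1` [set~ idx].
have finD : finite_set D by rewrite finite_setU.
have FD : F @^-1` [set~ idx] `<=` D by move=> j; left.
have GD : G @^-1` [set~ idx] `<=` D by move=> j; right.
have FGD : (fun j => op (F j) (G j)) @^-1` [set~ idx] `<=` D.
  move=> j /= FGj; apply: contrapT => /not_orP [/contrapT Fj /contrapT Gj].
  by apply: FGj; rewrite Fj Gj Monoid.simpm.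
rewrite (fsbig_restrict_supp A FGD) (fsbig_restrict_supp A FD) (fsbig_restrict_supp A GD).
have finAD : finite_set (A `&` D) by exact: finite_setIr.
by rewrite !fsbig_finite // big_split.
Qed.

End FinSupport.

Arguments fsbig_restrict_supp {K idx op I} A {F D}.

Section FinSupportSum.
Variables (V : nmodType) (I : choiceType).
Implicit Types (A : set I) (F G : I -> V).

Lemma fsumD1_supp A F x :
  finite_set (F @^-1` [set~ 0]) -> A x ->
  \sum_(j \in A) F j = F x + \sum_(j \in A `\ x) F j.
Proof. exact: fsbigD1_supp. Qed.

Lemma fsumD_supp A F G :
  finite_set (F @^-1` [set~ 0]) -> finite_set (G @^-1` [set~ 0]) ->
  \sum_(j \in A) (F j + G j) = \sum_(j \in A) F j + \sum_(j \in A) G j.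
Proof. exact: fsbig_split_supp. Qed.

End FinSupportSum.

Section FinSupportZmod.
Variables (V : zmodType) (I : choiceType).
Implicit Types (A : set I) (F G : I -> V).

Lemma fsumN A G :
  finite_set (G @^-1` [set~ 0]) -> \sum_(j \in A) - G j = - \sum_(j \in A) G j.
Proof.
move=> finG.
have NGG : (fun j => - G j) @^-1` [set~ 0] `<=` G @^-1` [set~ 0].
  by move=> j /=; apply: contra_not => ->; rewrite oppr0.
rewrite (fsbig_restrict_supp A NGG) (fsbig_restrict_supp A (@subset_refl _ (G @^-1` [set~ 0]))).
by rewrite !fsbig_finite ?sumrN //; exact: finite_setIr.
Qed.

Lemma fsumB A F G :
  finite_set (F @^-1` [set~ 0]) -> finite_set (G @^-1` [set~ 0]) ->
  \sum_(j \in A) (F j - G j) = \sum_(j \in A) F j - \sum_(j \in A) G j.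
Proof.
move=> finF finG; rewrite fsumD_supp ?fsumN //.
by apply: sub_finite_set finG => j /=; apply: contra_not => ->; rewrite oppr0.
Qed.

End FinSupportZmod.

Lemma bounded_int_finite (P : set int) (lo hi : int) :
  (forall i, P i -> lo <= i <= hi) -> finite_set P.
Proof.
move=> Pb.
have fin_win : finite_set ((fun k : nat => lo + k%:Z) @` `I_(absz (hi - lo)).+1).
  exact/finite_image/finite_II.
apply: sub_finite_set fin_win => i /Pb /andP [loi ihi].
by exists (absz (i - lo)); rewrite /=; lia.
Qed.

Lemma finite_int_bounded (P : set int) :
  finite_set P -> exists N : nat, forall n, P n -> - N%:Z <= n <= N%:Z.
Proof.
move=> /finite_fsetP [X PX].
exists (\max_(x <- finmap.enum_fset X) absz x) => n Pn.
have nX : n \in finmap.enum_fset X by move: Pn; rewrite PX.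
have := @leq_bigmax_seq _ _ xpredT (fun x : int => absz x) n nX isT.
by move: (\max_(x <- _) _)%N => m; lia.
Qed.

Lemma fsum_int_shift (V : nmodType) (F : int -> V) (c : int) :
  \sum_(n \in [set: int]) F (n + c) = \sum_(n \in [set: int]) F n.
Proof.
apply/esym/(reindex_fsbigT (fun n => n + c)).
by exists (fun n => n - c) => n /=; rewrite ?addrK ?subrK.
Qed.

Lemma fsbig_int_window (K : Type) (idx : K) (op : Monoid.com_law idx)
    (F : int -> K) (lo : int) (L : nat) :
  (forall k, ~ (lo <= k < lo + L%:Z) -> F k = idx) ->
  \big[op/idx]_(k \in [set: int]) F k = \big[op/idx]_(i < L) F (lo + i%:Z).
Proof.
move=> F0; rewrite -(big_mkord xpredT (fun i => F (lo + i%:Z))).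
rewrite -(big_map (fun i : nat => lo + i%:Z) xpredT F) [RHS]bigfs.
- by apply: eq_fsbigl; apply/seteqP; split => k.
- by rewrite map_inj_uniq ?iota_uniq // => i j /=; lia.
move=> k _ kL; apply: F0 => kwin; move/negP: kL; apply.
apply/mapP; exists (absz (k - lo)); last by lia.
by rewrite mem_index_iota; lia.
Qed.

Lemma int_ind_up (P : int -> Prop) (lo : int) :
  (forall a, a <= lo -> P a) -> (forall a, P a -> P (a + 1)) -> forall a, P a.
Proof.
move=> Plo PS a; have [/Plo //|loa] := lerP a lo.
have -> : a = lo + (absz (a - lo))%:Z by lia.
elim: (absz (a - lo)) => [|k IH]; first by apply: Plo; lia.
by rewrite (_ : lo + k.+1%:Z = (lo + k%:Z) + 1); [exact: PS | lia].
Qed.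

Lemma int_ind_down (P : int -> Prop) (hi : int) :
  (forall a, hi <= a -> P a) -> (forall a, P (a + 1) -> P a) -> forall a, P a.
Proof.
move=> Phi PS a; have [/Phi //|ahi] := lerP hi a.
have -> : a = hi - (absz (hi - a))%:Z by lia.
elim: (absz (hi - a)) => [|k IH]; first by apply: Phi; lia.
by apply: PS; rewrite (_ : hi - k.+1%:Z + 1 = hi - k%:Z) //; lia.
Qed.

Lemma finite_supp_int_bounded (V : zmodType) (c : int -> V) :
  finite_set [set k | c k != 0] ->
  exists N : nat, forall k, (k < - N%:Z) || (N%:Z < k) -> c k = 0.
Proof.
move=> /finite_int_bounded [N cN]; exists N => k k_out.
by apply/eqP; apply: contraLR k_out => /cN; lia.
Qed.

Lemma bounded_supp_int_finite (V : zmodType) (c : int -> V) (lo hi : int) :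
  (forall k, (k < lo) || (hi < k) -> c k = 0) -> finite_set (c @^-1` [set~ 0]).
Proof.
move=> c_out; apply: (@bounded_int_finite _ lo hi) => k /= ck.
by apply/negP => k_out; apply: ck; apply: c_out; lia.
Qed.

Section Signs.
Variable K : unitRingType.

Lemma signzS (d : int) : (-1) ^ (d + 1) = - ((-1) ^ d) :> K.
Proof. by rewrite exprzDr ?unitrN1 // expr1z mulrN1. Qed.

Lemma signz_sqr (d : int) : (-1) ^ d * (-1) ^ d = 1 :> K.
Proof.
rewrite -exprzDr ?unitrN1 // (_ : d + d = 2%:Z * d); last by lia.
rewrite -exprz_exp (_ : (-1) ^ 2%:Z = 1 :> K) ?exp1rz //.
by rewrite -[2%:Z]/(Posz 2) /exprz sqrrN expr1n.
Qed.

End Signs.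

Section ProdBetween.
Variables (K : comUnitRingType) (S : int -> K).

Definition prod_between (b a : int) : K :=
  \big[*%R/1]_(j \in [set j : int | (b < j) && (j < a)]) S j.

Lemma finite_between (b a : int) : finite_set [set j : int | (b < j) && (j < a)].
Proof. by apply: (@bounded_int_finite _ b a) => j /andP [bj ja]; lia. Qed.

Lemma prod_between_succ a : prod_between a (a + 1) = 1.
Proof. by apply: fsbig1 => j /andP [aj ja]; lia. Qed.

Lemma prod_betweenSr b a : b < a -> prod_between b (a + 1) = prod_between b a * S a.
Proof.
move=> ba; rewrite /prod_between (fsbigD1 a _ _ (finite_between _ _)) //=; last lia.
rewrite mulrC; congr (_ * _); apply: eq_fsbigl; apply/seteqP; split => j /=.
  by move=> [/andP [bj ja] /eqP aj]; lia.
by move=> /andP [bj ja]; split; [|apply/eqP]; lia.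
Qed.

Lemma prod_betweenSl a b : a + 1 < b -> prod_between a b = S (a + 1) * prod_between (a + 1) b.
Proof.
move=> ab; rewrite /prod_between (fsbigD1 (a + 1) _ _ (finite_between _ _)) //=; last lia.
congr (_ * _); apply: eq_fsbigl; apply/seteqP; split => j /=.
  by move=> [/andP [aj jb] /eqP ja]; lia.
by move=> /andP [aj jb]; split; [|apply/eqP]; lia.
Qed.

Lemma prod_between_eq0 b a j : b < j < a -> S j = 0 -> prod_between b a = 0.
Proof.
by move=> bja Sj0; rewrite /prod_between (fsbigD1 j _ _ (finite_between _ _)) //= Sj0 mul0r.
Qed.

End ProdBetween.

Lemma prod_betweenN (K : comUnitRingType) (S : int -> K) a b : a < b ->
  prod_between (fun j => - S j) a b = (-1) ^ (b - a - 1) * prod_between S a b.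
Proof.
move=> ab; have -> : b = a + 1 + (absz (b - a - 1)%R)%:Z by lia.
elim: (absz (b - a - 1)%R) => [|k IH].
  by rewrite addr0 !prod_between_succ (_ : a + 1 - a - 1 = 0) ?mul1r //; lia.
rewrite (_ : a + 1 + k.+1%:Z = (a + 1 + k%:Z) + 1); last by lia.
rewrite !prod_betweenSr ?IH; try lia.
by rewrite (_ : a + 1 + k%:Z + 1 - a - 1 = (a + 1 + k%:Z - a - 1) + 1) ?signzS; [ring | lia].
Qed.

Section Eigenvector.
Variables (K : fieldType) (S C : int -> K) (z : K) (M : int).
Hypotheses (z_neq0 : z != 0) (C_sqr : forall j, C j ^+ 2 = 1 + S j ^+ 2)
  (S_supp : forall j, S j != 0 -> - M <= j <= M).

Definition lfac (j : int) := 1 + S j * z^-1.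
Definition rfac (j : int) := 1 - S j * z.
Definition lprod (n : int) := \big[*%R/1]_(j \in [set j : int | j <= n - 1]) lfac j.
Definition rprod (n : int) := \big[*%R/1]_(j \in [set j : int | n + 1 <= j]) rfac j.
Definition phic (n : int) := C n * z ^ n * lprod n * rprod n.

Local Notation P := (prod_between S).

Lemma S_out j : (j < - M) || (M < j) -> S j = 0.
Proof. by move=> j_out; apply/eqP; apply: contraLR j_out => /S_supp; lia. Qed.

Lemma C_out_sqr j : (j < - M) || (M < j) -> C j * C j = 1.
Proof. by move=> /S_out Sj0; rewrite -expr2 C_sqr Sj0 expr0n addr0. Qed.

Lemma expzS n : z ^ (n + 1) = z ^ n * z.
Proof. by rewrite exprzDr ?unitfE. Qed.

Lemma finite_lfac_supp : finite_set (lfac @^-1` [set~ 1]).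
Proof.
apply: (@bounded_int_finite _ (- M) M) => j /= lj1; apply: S_supp.
by apply/eqP => Sj0; apply: lj1; rewrite /lfac Sj0 mul0r addr0.
Qed.

Lemma finite_rfac_supp : finite_set (rfac @^-1` [set~ 1]).
Proof.
apply: (@bounded_int_finite _ (- M) M) => j /= rj1; apply: S_supp.
by apply/eqP => Sj0; apply: rj1; rewrite /rfac Sj0 mul0r subr0.
Qed.

Lemma lprodS n : lprod (n + 1) = lprod n * lfac n.
Proof.
rewrite /lprod (fsbigD1_supp _ (x := n) finite_lfac_supp) /=; last lia.
rewrite mulrC; congr (_ * _); apply: eq_fsbigl; apply/seteqP; split => j /=.
  by move=> [jn /eqP nj]; lia.
by move=> jn; split; [|apply/eqP]; lia.
Qed.

Lemma rprodS n : rprod n = rfac (n + 1) * rprod (n + 1).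
Proof.
rewrite /rprod (fsbigD1_supp _ (x := n + 1) finite_rfac_supp) /=; last lia.
congr (_ * _); apply: eq_fsbigl; apply/seteqP; split => j /=.
  by move=> [nj /eqP jn]; lia.
by move=> nj; split; [|apply/eqP]; lia.
Qed.

Lemma lprod_low n : n <= - M -> lprod n = 1.
Proof. by move=> nM; apply: fsbig1 => j /= jn; rewrite /lfac S_out ?mul0r ?addr0 //; lia. Qed.

Lemma rprod_high n : M <= n -> rprod n = 1.
Proof. by move=> Mn; apply: fsbig1 => j /= nj; rewrite /rfac S_out ?mul0r ?subr0 //; lia. Qed.

Definition lterm (a b : int) : K := if b < a then - (P b a * C b * phic b) else 0.
Definition lsum (a : int) := \sum_(b \in [set: int]) lterm a b.

Lemma finite_lterm_supp a : finite_set (lterm a @^-1` [set~ 0]).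
Proof.
apply: (@bounded_int_finite _ (Num.min (a - 1) (- M - 1)) (a - 1)) => b /=.
rewrite /lterm; case: ifP => // ba term_neq0.
have [bM|] := ltrP b (- M - 1); last by lia.
have [ba1|] := ltrP b (a - 1); last by lia.
by exfalso; apply: term_neq0; rewrite (@prod_between_eq0 _ _ _ _ (b + 1)) ?S_out ?mul0r ?oppr0 //; lia.
Qed.

Lemma lsumS a : lsum (a + 1) = S a * lsum a - C a * phic a.
Proof.
rewrite /lsum (fsumD1_supp (x := a) (finite_lterm_supp (a + 1))) //.
rewrite [in RHS](fsumD1_supp (x := a) (finite_lterm_supp a)) //.
have -> : lterm (a + 1) a = - (C a * phic a).
  by rewrite /lterm ifT ?prod_between_succ ?mul1r //; lia.
have -> : lterm a a = 0 by rewrite /lterm ltxx.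
rewrite add0r mulr_fsumr addrC; congr (_ - _); apply: eq_fsbigr => b /set_mem [_ /= ba].
rewrite /lterm; case: (ltrP b a) => ba'; first by rewrite ifT ?prod_betweenSr //; [ring | lia].
by rewrite ifF ?mulr0 //; apply/negbTE; lia.
Qed.

Lemma lsum_low a : a <= - M -> lsum a = - (z ^ (a - 1) * lprod a * rprod (a - 1)).
Proof.
move=> aM; rewrite /lsum (fsumD1_supp (x := a - 1) (finite_lterm_supp _)) //.
rewrite fsbig1 ?addr0; last first.
  move=> b [_ /= ba]; rewrite /lterm; case: ifP => // b_lt_a.
  by rewrite (@prod_between_eq0 _ _ _ _ (b + 1)) ?S_out ?mul0r ?oppr0 //; lia.
rewrite /lterm ifT; last lia.
have -> : P (a - 1) a = 1 by rewrite -{2}(subrK 1 a) prod_between_succ.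
rewrite /phic !lprod_low; try lia.
by rewrite !mulr1 mul1r !mulrA C_out_sqr ?mul1r //; lia.
Qed.

Lemma lsum_closed a : lsum a = - (z ^ (a - 1) * lprod a * rprod (a - 1)).
Proof.
move: a; apply: (@int_ind_up _ (- M)) => [a aM|a IH]; first exact: lsum_low.
have za : z ^ a = z ^ (a - 1) * z by rewrite -expzS subrK.
rewrite lsumS IH addrK lprodS (rprodS (a - 1)) subrK /phic za /lfac /rfac.
by rewrite !mulrA -(expr2 (C a)) C_sqr; field.
Qed.

Definition rterm (a b : int) : K :=
  if a < b then (-1) ^ (b - a) * P a b * C b * phic b else 0.
Definition rsum (a : int) := \sum_(b \in [set: int]) rterm a b.

Lemma finite_rterm_supp a : finite_set (rterm a @^-1` [set~ 0]).
Proof.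
apply: (@bounded_int_finite _ (a + 1) (Num.max (a + 1) (M + 1))) => b /=.
rewrite /rterm; case: ifP => // ab term_neq0.
have [Mb|] := ltrP (M + 1) b; last by lia.
have [ab1|] := ltrP (a + 1) b; last by lia.
by exfalso; apply: term_neq0; rewrite (@prod_between_eq0 _ _ _ _ (b - 1)) ?S_out ?mulr0 ?mul0r //; lia.
Qed.

Lemma rsumS a : rsum a = - (C (a + 1) * phic (a + 1)) - S (a + 1) * rsum (a + 1).
Proof.
rewrite /rsum (fsumD1_supp (x := a + 1) (finite_rterm_supp a)) //.
rewrite [in RHS](fsumD1_supp (x := a + 1) (finite_rterm_supp (a + 1))) //.
have -> : rterm a (a + 1) = - (C (a + 1) * phic (a + 1)).
  rewrite /rterm ifT ?prod_between_succ; last lia.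
  by rewrite (_ : a + 1 - a = 1) ?expr1z; [ring | lia].
have -> : rterm (a + 1) (a + 1) = 0 by rewrite /rterm ltxx.
rewrite add0r -(mulNr (S (a + 1))) mulr_fsumr; congr (_ + _).
apply: eq_fsbigr => b /set_mem [_ /= ba].
rewrite /rterm; case: (ltrP (a + 1) b) => ab; last by rewrite ifF ?mulr0 //; apply/negbTE; lia.
rewrite ifT ?(prod_betweenSl S (a := a)); try lia.
by rewrite (_ : b - a = (b - (a + 1)) + 1) ?signzS; [ring | lia].
Qed.

Lemma rsum_high a : M <= a -> rsum a = - (z ^ (a + 1) * lprod (a + 1) * rprod a).
Proof.
move=> Ma; rewrite /rsum (fsumD1_supp (x := a + 1) (finite_rterm_supp _)) //.
rewrite fsbig1 ?addr0; last first.
  move=> b [_ /= ab]; rewrite /rterm; case: ifP => // a_lt_b.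
  by rewrite (@prod_between_eq0 _ _ _ _ (b - 1)) ?S_out ?mulr0 ?mul0r //; lia.
rewrite /rterm ifT ?prod_between_succ; last lia.
rewrite (_ : a + 1 - a = 1) ?expr1z; last lia.
rewrite /phic !rprod_high; try lia.
by rewrite !mulr1 mulN1r !mulNr !mulrA C_out_sqr ?mul1r //; lia.
Qed.

Lemma rsum_closed a : rsum a = - (z ^ (a + 1) * lprod (a + 1) * rprod a).
Proof.
move: a; apply: (@int_ind_down _ M) => [a Ma|a IH]; first exact: rsum_high.
rewrite rsumS IH (rprodS a) (lprodS (a + 1)) /phic (expzS (a + 1)) /lfac /rfac.
by rewrite !mulrA -(expr2 (C (a + 1))) C_sqr; field.
Qed.

Definition hmat (a b : int) : K :=
  (if b < a then - (C a * P b a * C b) else 0) +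
  (if a < b then (-1) ^ (b - a) * C a * P a b * C b else 0).

Lemma hmat_phicE a b : hmat a b * phic b = C a * (lterm a b + rterm a b).
Proof.
rewrite /hmat /lterm /rterm.
by case: (ltrP b a) => ba; case: (ltrP a b) => ab; try lia; ring.
Qed.

Lemma hmat_eigen a : \sum_(b \in [set: int]) hmat a b * phic b = - (z + z^-1) * phic a.
Proof.
under eq_fsbigr do rewrite hmat_phicE.
rewrite -mulr_fsumr fsumD_supp; [|exact: finite_lterm_supp|exact: finite_rterm_supp].
rewrite -/(lsum a) -/(rsum a) lsum_closed rsum_closed.
have za : z ^ (a - 1) = z ^ a * z^-1 by rewrite -[in RHS](subrK 1 a) expzS mulfK.
by rewrite za -{2}(subrK 1 a) rprodS subrK lprodS expzS /phic /lfac /rfac; field.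
Qed.

Lemma phic_step n :
  (z + S n) * phic n * C (n + 1) = (1 - S (n + 1) * z) * phic (n + 1) * C n.
Proof. by rewrite /phic lprodS (rprodS n) expzS /lfac /rfac; field. Qed.

End Eigenvector.

Lemma hmatN (K : fieldType) (S C : int -> K) a b :
  hmat S C a b = hmat (fun j => - S j) C b a.
Proof.
rewrite /hmat; case: (ltrP a b) => ab.
  have -> : (b < a) = false by apply/negbTE; lia.
  by rewrite add0r addr0 prod_betweenN // -{1}(subrK 1 (b - a)) signzS; ring.
case: (ltrP b a) => ba; last by rewrite !addr0.
rewrite !addr0 add0r prod_betweenN // -{1}(subrK 1 (a - b)) signzS.
have := signz_sqr K (a - b - 1); move: ((-1) ^ (a - b - 1)) => s ss1.
by rewrite -[LHS]mul1r -ss1; ring.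
Qed.

Section ExpI.
Variable R : realType.
Local Open Scope complex_scope.

Lemma expiD (x y : R) : expi (x + y) = expi x * expi y.
Proof.
rewrite /expi cosD sinD; apply/eqP; rewrite eq_complex /=.
by apply/andP; split; apply/eqP; ring.
Qed.

Lemma expi0 : expi (0 : R) = 1.
Proof. by rewrite /expi cos0 sin0. Qed.

Lemma expiNK (x : R) : expi (- x) * expi x = 1.
Proof. by rewrite -expiD addNr expi0. Qed.

Lemma expi_neq0 (x : R) : expi x != 0.
Proof. by apply: contra_eq_neq (expiNK x) => ->; rewrite mulr0 eq_sym oner_neq0. Qed.

Lemma expiN (x : R) : expi (- x) = (expi x)^-1.
Proof. by rewrite -[LHS]mulr1 -(divff (expi_neq0 x)) mulrA expiNK mul1r. Qed.

Lemma expiMn (n : nat) (x : R) : expi (n%:R * x) = expi x ^+ n.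
Proof.
elim: n => [|n IH]; first by rewrite mul0r expi0.
by rewrite mulrSr mulrDl mul1r expiD IH exprSr.
Qed.

Lemma expiMz (k : int) (x : R) : expi (k%:~R * x) = expi x ^ k.
Proof.
case: k => n; first exact: expiMn.
by rewrite NegzE mulrNz mulNr expiN expiMn -(exprz_inv (expi x) n.+1) -exprVn.
Qed.

End ExpI.

Section Hyperbolic.
Variable R : realType.

Lemma coshR_sqr (x : R) : coshR x ^+ 2 = 1 + sinhR x ^+ 2.
Proof.
have ex_neq0 : expR x != 0 by rewrite gt_eqF ?expR_gt0.
by rewrite /coshR /sinhR expRN; field.
Qed.

Lemma sinhR0 : sinhR (0 : R) = 0.
Proof. by rewrite /sinhR oppr0 subrr mul0r. Qed.

Lemma coshR0 : coshR (0 : R) = 1.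
Proof. by rewrite /coshR oppr0 expR0 divff ?pnatr_eq0. Qed.

Lemma coshR_gt0 (x : R) : 0 < coshR x.
Proof. by rewrite /coshR divr_gt0 ?addr_gt0 ?expR_gt0. Qed.

End Hyperbolic.

Section Coefficients.
Variables (R : realType) (gamma : int -> R).
Local Notation S := (Sg gamma).
Local Notation C := (Cg gamma).

Lemma Cg_sqr n : C n ^+ 2 = 1 + S n ^+ 2.
Proof. by rewrite /Cg /Sg -!rmorphXn coshR_sqr rmorphD rmorph1. Qed.

Lemma Cg_neq0 n : C n != 0.
Proof. by rewrite /Cg eq_complex /= negb_and (gt_eqF (coshR_gt0 _)). Qed.

Lemma SCg_gamma0 n : gamma n = 0 -> S n = 0 /\ C n = 1.
Proof. by move=> g0; rewrite /Sg /Cg g0 sinhR0 coshR0. Qed.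

Lemma phi_coefE theta n : phi_coef gamma theta n = phic S C (expi theta) n.
Proof. by rewrite /phi_coef /phic /lprod /rprod /lfac /rfac expiMz expiN. Qed.

Lemma phis_coefE theta n :
  phis_coef gamma theta n = phic (fun j => - S j) C (expi (- theta)) n.
Proof.
rewrite /phis_coef /phic /lprod /rprod /lfac /rfac -mulrN expiMz -expiN opprK.
by congr (_ * _ * _); apply: eq_fsbigr => j _; rewrite mulNr ?opprK.
Qed.

Lemma calH_single a b (m0 n0 : int) : n0 < m0 ->
  (forall m n, n < m -> (m, n) != (m0, n0) -> Hmn R m n a b = 0) ->
  calH gamma a b = hcoef gamma m0 n0 * Hmn R m0 n0 a b.
Proof.
move=> nm0 Hmn0; rewrite /calH -(fsbig_widen [set (m0, n0)]) ?fsbig_set1 //.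
  by move=> mn /= ->.
move=> [m n] [/= nm mn_neq]; rewrite /preimage /= Hmn0 ?mulr0 //.
exact/eqP.
Qed.

Lemma Hmn_off m n a b : (a, b) != (n, m) -> (a, b) != (m, n) -> Hmn R m n a b = 0.
Proof.
move=> ab_nm ab_mn; rewrite /Hmn.
have -> : (a == n) && (b == m) = false by apply: contraNF ab_nm => /andP [/eqP -> /eqP ->].
have -> : (a == m) && (b == n) = false by apply: contraNF ab_mn => /andP [/eqP -> /eqP ->].
by rewrite mulr0 addr0.
Qed.

Lemma calHE a b : calH gamma a b = hmat S C a b.
Proof.
rewrite /hmat; case: (ltrP a b) => ab.
  have -> : (b < a) = false by apply/negbTE; lia.
  rewrite add0r (@calH_single _ _ b a) // => [|m n nm mn_ba]; last first.
    apply: Hmn_off; first by apply: contra_neq mn_ba => -[-> ->].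
    by apply/eqP => -[am bn]; lia.
  by rewrite /hcoef /Hmn -/(prod_between S a b) !eqxx (_ : a == b = false) ?mulr0 ?addr0 ?mulr1; [ring | lia].
case: (ltrP b a) => ba; last first.
  rewrite !addr0 /calH fsbig1 // => -[m n] /= nm.
  by rewrite Hmn_off ?mulr0 //; apply/eqP => -[am bn]; lia.
rewrite addr0 (@calH_single _ _ a b) // => [|m n nm mn_ab]; last first.
  apply: Hmn_off; last by apply: contra_neq mn_ab => -[-> ->].
  by apply/eqP => -[an bm]; lia.
rewrite /hcoef /Hmn !eqxx (_ : a == b = false) ?add0r ?mulr1; last lia.
rewrite signzS; have := signz_sqr R[i] (a - b); move: ((-1) ^ (a - b)) => s ss1.
by rewrite -/(prod_between S b a) -[RHS]mulN1r -ss1; ring.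
Qed.

End Coefficients.

Section Commutators.
Variables (R : realType) (gamma : int -> R) (M : int).
Hypothesis gamma_supp : forall n, gamma n != 0 -> - M <= n <= M.
Local Notation S := (Sg gamma).
Local Notation C := (Cg gamma).

Lemma Sg_supp j : S j != 0 -> - M <= j <= M.
Proof. by move=> Sj; apply: gamma_supp; apply: contra_neq Sj => /SCg_gamma0 []. Qed.

Lemma SgN_supp j : - S j != 0 -> - M <= j <= M.
Proof. by rewrite oppr_eq0; exact: Sg_supp. Qed.

Lemma Cg_sqrN n : C n ^+ 2 = 1 + (- S n) ^+ 2.
Proof. by rewrite sqrrN Cg_sqr. Qed.

Lemma calH_comm_phi theta :
  fcomm (calH gamma) (phi gamma theta)
  = fscale (- (expi theta + expi (- theta))) (phi gamma theta).
Proof.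
rewrite /fcomm /fscale /=; congr FLin; apply/funext => a /=; last first.
  by rewrite fsbig1 ?oppr0 ?mulr0 // => b _; rewrite mulr0.
under eq_fsbigr do rewrite calHE phi_coefE.
by rewrite (hmat_eigen (expi_neq0 theta) (@Cg_sqr _ gamma) Sg_supp) phi_coefE expiN.
Qed.

Lemma calH_comm_phis theta :
  fcomm (calH gamma) (phis gamma theta)
  = fscale (expi theta + expi (- theta)) (phis gamma theta).
Proof.
rewrite /fcomm /fscale /=; congr FLin; apply/funext => b /=.
  by rewrite fsbig1 ?mulr0 // => a _; rewrite mulr0.
under eq_fsbigr do rewrite calHE hmatN phis_coefE.
rewrite (hmat_eigen (expi_neq0 (- theta)) Cg_sqrN SgN_supp) phis_coefE expiN invrK.
by rewrite mulNr opprK addrC.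
Qed.

End Commutators.

Lemma fsum_int_cauchy (K : idomainType) (a b : int -> K) (N1 N2 : nat) :
  (forall r, (r < - N1%:Z) || (N1%:Z < r) -> a r = 0) ->
  (forall t, (t < - N2%:Z) || (N2%:Z < t) -> b t = 0) ->
  (\sum_(r \in [set: int]) a r) * (\sum_(t \in [set: int]) b t) =
  \sum_(s \in [set: int]) \sum_(r \in [set: int]) a r * b (s - r).
Proof.
move=> a0 b0.
pose W1 := [set r : int | - N1%:Z <= r <= N1%:Z].
pose Ws := [set s : int | - (N1 + N2)%:Z <= s <= (N1 + N2)%:Z].
have fin_W1 : finite_set W1 by apply: (@bounded_int_finite _ (- N1%:Z) N1%:Z).
have fin_Ws : finite_set Ws by apply: (@bounded_int_finite _ (- (N1 + N2)%:Z) (N1 + N2)%:Z).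
have ab0 s r : ~ Ws s -> a r * b (s - r) = 0.
  move=> s_out; have [r_out|r_in] := boolP ((r < - N1%:Z) || (N1%:Z < r)).
    by rewrite a0 ?mul0r.
  by rewrite b0 ?mulr0 //; move: s_out; rewrite /Ws /=; lia.
have a0W r : ~ W1 r -> a r = 0 by rewrite /W1 /= => r_out; rewrite a0 //; lia.
rewrite mulr_fsuml -(fsbig_widen W1) // => [|r [_ /a0W ar0]]; last by rewrite /preimage /= ar0 mul0r.
rewrite -[RHS](fsbig_widen Ws) // => [|s [_ /ab0 s_out]]; last by rewrite /preimage /=; apply: fsbig1 => r _; exact: s_out.
have inner s : \sum_(r \in [set: int]) a r * b (s - r) = \sum_(r \in W1) a r * b (s - r).
  by rewrite (fsbig_widen W1 setT) // => r [_ /a0W ar0]; rewrite /preimage /= ar0 mul0r.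
under [RHS]eq_fsbigr do rewrite inner.
rewrite -exchange_fsbig //; apply: eq_fsbigr => r _.
rewrite -(fsum_int_shift _ (- r)) mulr_fsumr (fsbig_widen Ws setT) //.
by move=> s [_ s_out]; exact: ab0.
Qed.

Section TrigPoly.
Variable R : realType.
Implicit Types (c d : int -> R[i]) (f g : R -> R[i]).

Lemma uniq_expi_fracs (L : nat) : uniq [seq expi (i%:R / L%:R : R) | i <- iota 0 L].
Proof.
rewrite map_inj_in_uniq ?iota_uniq // => i j; rewrite !mem_iota !add0n => iL jL.
move=> -[cos_ij _]; have L_neq0 : (L%:R : R) != 0 by rewrite pnatr_eq0 -lt0n (leq_ltn_trans _ iL).
have frac_in k : (k < L)%N -> (k%:R / L%:R : R) \in `[0, pi].
  move=> kL; rewrite in_itv /= divr_ge0 ?ler0n //=.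
  apply: (le_trans _ (pi_ge2 R)); apply: (le_trans _ (ler1n R 2)).
  rewrite ler_pdivrMr ?ltr0n; last lia.
  by rewrite mul1r ler_nat; lia.
have := cos_inj (frac_in _ iL) (frac_in _ jL) cos_ij.
by move=> /(congr1 ( *%R^~ L%:R)); rewrite !divfK // => /eqP; rewrite eqr_nat => /eqP.
Qed.

Lemma poly_eq0_on_circle (p : {poly R[i]}) : (forall x : R, p.[expi x] = 0) -> p = 0.
Proof.
move=> p_circle; apply/eqP; apply: contraT => p_neq0.
have := max_poly_roots p_neq0 _ (uniq_expi_fracs (size p)).
rewrite size_map size_iota ltnn; apply.
by apply/allP => y /mapP [i _ ->]; rewrite /root p_circle.
Qed.

Lemma finite_supp_mulr c (g : int -> R[i]) :
  finite_set [set k | c k != 0] -> finite_set ((fun k => c k * g k) @^-1` [set~ 0]).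
Proof. by apply: sub_finite_set => k /= cg0; apply/eqP => ck0; apply: cg0; rewrite ck0 mul0r. Qed.

Lemma trig_coeffs0 c f : trig_coeffs c f -> (forall x, f x = 0) -> forall k, c k = 0.
Proof.
move=> [fin_c cf] f0; have [N cN] := finite_supp_int_bounded fin_c.
pose p := \poly_(i < (2 * N).+1) c (- N%:Z + i%:Z).
have p0 : p = 0.
  apply: poly_eq0_on_circle => x; rewrite horner_poly.
  have := cf x; rewrite f0 (@fsbig_int_window _ _ _ _ (- N%:Z) (2 * N).+1); last first.
    by move=> k k_out; rewrite cN ?mul0r //; lia.
  move/esym => sum0.
  rewrite (eq_bigr (fun i : 'I__ => expi (N%:R * x) *
    (c (- N%:Z + i%:Z) * expi ((- N%:Z + i%:Z)%:~R * x)))); first by rewrite -mulr_sumr sum0 mulr0.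
  move=> i _; rewrite mulrCA -expiD -expiMn -mulrDl.
  by rewrite intrD mulrNz pmulrn addNKr.
move=> k; have [/cN //|k_in] := boolP ((k < - N%:Z) || (N%:Z < k)).
have := congr1 (fun q : {poly R[i]} => q`_(absz (k + N%:Z))) p0.
rewrite coef_poly coef0 /= ifT; last by lia.
by rewrite (_ : - N%:Z + (absz (k + N%:Z))%:Z = k) //; lia.
Qed.

Lemma trig_coeffsB c d f g : trig_coeffs c f -> trig_coeffs d g ->
  trig_coeffs (fun k => c k - d k) (fun x => f x - g x).
Proof.
move=> [fin_c cf] [fin_d dg]; split.
  have fin_cd : finite_set ([set k | c k != 0] `|` [set k | d k != 0]) by rewrite finite_setU.
  apply: sub_finite_set fin_cd => k /= cdk; have [ck0|] := eqVneq (c k) 0; last by left.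
  by right; apply: contraNneq cdk => dk0; rewrite ck0 dk0 subrr.
move=> x; rewrite cf dg -fsumB; [|exact: finite_supp_mulr|exact: finite_supp_mulr].
by apply: eq_fsbigr => k _; rewrite mulrBl.
Qed.

Lemma trig_coeffs_uniq c d f : trig_coeffs c f -> trig_coeffs d f -> c = d.
Proof.
move=> cf df; apply/funext => k; apply/eqP; rewrite -subr_eq0; apply/eqP.
by apply: (trig_coeffs0 (trig_coeffsB cf df)) => x; rewrite subrr.
Qed.

Lemma trig_coeffs_affine c f (al be : R[i]) : trig_coeffs c f ->
  trig_coeffs (fun k => al * c k + be * c (k - 1)) (fun x => (al + be * expi x) * f x).
Proof.
move=> [fin_c cf]; have [N cN] := finite_supp_int_bounded fin_c.
split.
  apply: (@bounded_int_finite _ (- N%:Z) (N%:Z + 1)) => k /= ck.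
  apply/negP => k_out; move: ck; rewrite cN ?(cN (k - 1)) ?mulr0 ?addr0 ?eqxx //; lia.
move=> x.
under eq_fsbigr do rewrite mulrDl -!mulrA.
rewrite fsumD_supp; last 2 first.
- by apply: (@bounded_supp_int_finite _ _ (- N%:Z) N%:Z) => k k_out; rewrite cN ?mul0r ?mulr0.
- apply: (@bounded_supp_int_finite _ _ (- N%:Z + 1) (N%:Z + 1)) => k k_out.
  by rewrite cN ?mul0r ?mulr0 //; lia.
rewrite -!mulr_fsumr -cf -(@fsum_int_shift _ (fun k => c (k - 1) * expi (k%:~R * x)) 1) /=.
under eq_fsbigr do rewrite addrK intrD mulrDl mul1r expiD mulrA mulrC.
by rewrite -mulr_fsumr -cf mulrDl mulrA.
Qed.

Lemma trig_coeffs_mul c d f g : trig_coeffs c f -> trig_coeffs d g ->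
  trig_coeffs (fun s => \sum_(r \in [set: int]) c r * d (s - r)) (fun x => f x * g x).
Proof.
move=> [fin_c cf] [fin_d dg].
have [N1 cN] := finite_supp_int_bounded fin_c; have [N2 dN] := finite_supp_int_bounded fin_d.
split.
  apply: (@bounded_int_finite _ (- (N1 + N2)%:Z) (N1 + N2)%:Z) => s /=.
  apply: contraNT => s_out; apply/eqP/fsbig1 => r _.
  have [r_out|r_in] := boolP ((r < - N1%:Z) || (N1%:Z < r)); first by rewrite cN ?mul0r.
  by rewrite dN ?mulr0 //; lia.
move=> x; rewrite cf dg (@fsum_int_cauchy _ _ _ N1 N2).
- apply: eq_fsbigr => s _; rewrite mulr_fsuml; apply: eq_fsbigr => r _.
  by rewrite mulrACA -expiD -mulrDl -intrD (addrC r) subrK.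
- by move=> r r_out; rewrite cN ?mul0r.
- by move=> t t_out; rewrite dN ?mul0r.
Qed.

End TrigPoly.

Lemma band_bounded (V : zmodType) (F : int -> int -> V) (n0 n1 : int) :
  n0 <= n1 -> (forall n, finite_set [set p | F n p != 0]) ->
  (forall (k : nat) p, F (n0 - k%:Z) p = F n0 (p - k%:Z)) ->
  (forall (k : nat) p, F (n1 + k%:Z) p = F n1 (p + k%:Z)) ->
  exists K : nat, forall n p, F n p != 0 -> - K%:Z <= n + p <= K%:Z.
Proof.
move=> n01 finF below above.
pose W := [set n : int | n0 <= n <= n1].
pose D := \bigcup_(n in W) ((fun p => n + p) @` [set p | F n p != 0]).
have finD : finite_set D.
  apply: bigcup_finite => [|n _]; last exact/finite_image/finF.
  exact: (@bounded_int_finite _ n0 n1).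
have [K DK] := finite_int_bounded finD; exists K => n p Fnp; apply: DK.
have [nn0|n0n] := ltrP n n0.
  have n_below : n = n0 - (absz (n0 - n))%:Z by lia.
  exists n0; first by rewrite /W /=; lia.
  exists (p - (absz (n0 - n))%:Z); first by rewrite /= -below -n_below.
  by rewrite {2}n_below; ring.
have [n1n|nn1] := ltrP n1 n.
  have n_above : n = n1 + (absz (n - n1))%:Z by lia.
  exists n1; first by rewrite /W /=; lia.
  exists (p + (absz (n - n1))%:Z); first by rewrite /= -above -n_above.
  by rewrite {2}n_above; ring.
by exists n; [rewrite /W /=; lia | exists p].
Qed.

Section Anticommutator.
Variables (R : realType) (gamma : int -> R) (M : int).
Hypotheses (M_ge0 : 0 <= M) (gamma_supp : forall n, gamma n != 0 -> - M <= n <= M).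
Variables (ca cb : int -> int -> R[i]) (cP : int -> R[i]).
Hypotheses (ca_phi : forall n, trig_coeffs (ca n) (fun t => phi_coef gamma t n))
  (cb_phis : forall n, trig_coeffs (cb n) (fun t => phis_coef gamma t n))
  (cP_P : trig_coeffs cP (Pprod gamma)).
Local Notation S := (Sg gamma).
Local Notation C := (Cg gamma).

Lemma SCg_out n : (n < - M) || (M < n) -> S n = 0 /\ C n = 1.
Proof. by move=> n_out; apply: SCg_gamma0; apply/eqP; apply: contraLR n_out => /gamma_supp; lia. Qed.

Lemma phi_coef_step t n :
  (C (n + 1) * S n + C (n + 1) * expi t) * phi_coef gamma t n =
  (C n + - (C n * S (n + 1)) * expi t) * phi_coef gamma t (n + 1).
Proof.
rewrite !phi_coefE; have := phic_step C (expi_neq0 t) (Sg_supp gamma_supp) n.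
move: (phic _ _ _ n) (phic _ _ _ (n + 1)) => u v step.
by transitivity ((expi t + S n) * u * C (n + 1)); [ring | rewrite step; ring].
Qed.

Lemma phis_coef_step t n :
  (C (n + 1) + - (C (n + 1) * S n) * expi t) * phis_coef gamma t n =
  (C n * S (n + 1) + C n * expi t) * phis_coef gamma t (n + 1).
Proof.
rewrite !phis_coefE; have := phic_step C (expi_neq0 (- t)) (SgN_supp gamma_supp) n.
move: (phic _ _ _ n) (phic _ _ _ (n + 1)); rewrite expiN => u v step.
have et := expi_neq0 t.
by transitivity (expi t * (((expi t)^-1 + - S n) * u * C (n + 1))); [field | rewrite step; field].
Qed.

Lemma ca_step n q :
  C (n + 1) * S n * ca n q + C (n + 1) * ca n (q - 1) =
  C n * ca (n + 1) q + - (C n * S (n + 1)) * ca (n + 1) (q - 1).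
Proof.
have := trig_coeffs_affine (C (n + 1) * S n) (C (n + 1)) (ca_phi n).
have := trig_coeffs_affine (C n) (- (C n * S (n + 1))) (ca_phi (n + 1)).
rewrite -(funext (phi_coef_step ^~ n)) => coef_n1 coef_n.
exact: (congr1 (fun c => c q) (trig_coeffs_uniq coef_n coef_n1)).
Qed.

Lemma cb_step n p :
  C (n + 1) * cb n p + - (C (n + 1) * S n) * cb n (p - 1) =
  C n * S (n + 1) * cb (n + 1) p + C n * cb (n + 1) (p - 1).
Proof.
have := trig_coeffs_affine (C (n + 1)) (- (C (n + 1) * S n)) (cb_phis n).
have := trig_coeffs_affine (C n * S (n + 1)) (C n) (cb_phis (n + 1)).
rewrite -(funext (phis_coef_step ^~ n)) => coef_n1 coef_n.
exact: (congr1 (fun c => c p) (trig_coeffs_uniq coef_n coef_n1)).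
Qed.

Lemma cb_shift_out n p : (n + 1 < - M) || (M < n) -> cb n p = cb (n + 1) (p - 1).
Proof.
move=> n_out; have := cb_step n p.
have [-> ->] : S n = 0 /\ C n = 1 by apply: SCg_out; lia.
have [-> ->] : S (n + 1) = 0 /\ C (n + 1) = 1 by apply: SCg_out; lia.
by rewrite !mul1r oppr0 !mul0r addr0 add0r.
Qed.

Lemma ca_shift_out n q : (n + 1 < - M) || (M < n) -> ca n (q - 1) = ca (n + 1) q.
Proof.
move=> n_out; have := ca_step n q.
have [-> ->] : S n = 0 /\ C n = 1 by apply: SCg_out; lia.
have [-> ->] : S (n + 1) = 0 /\ C (n + 1) = 1 by apply: SCg_out; lia.
by rewrite !mul1r oppr0 !mul0r addr0 add0r.
Qed.

Let n0 := - M - 1.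
Let n1 := M + 1.

Lemma cb_below (k : nat) p : cb (n0 - k%:Z) p = cb n0 (p - k%:Z).
Proof.
elim: k p => [|k IH] p; first by rewrite !subr0.
rewrite cb_shift_out; last by rewrite /n0; lia.
by rewrite (_ : n0 - k.+1%:Z + 1 = n0 - k%:Z) ?IH; [congr cb; lia | lia].
Qed.

Lemma ca_below (k : nat) q : ca (n0 - k%:Z) q = ca n0 (q + k%:Z).
Proof.
elim: k q => [|k IH] q; first by rewrite subr0 addr0.
rewrite -[q](addrK 1) ca_shift_out; last by rewrite /n0; lia.
by rewrite (_ : n0 - k.+1%:Z + 1 = n0 - k%:Z) ?IH; [congr ca; lia | lia].
Qed.

Lemma cb_above (k : nat) p : cb (n1 + k%:Z) p = cb n1 (p + k%:Z).
Proof.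
elim: k p => [|k IH] p; first by rewrite !addr0.
rewrite (_ : n1 + k.+1%:Z = n1 + k%:Z + 1); last lia.
rewrite -[p](addrK 1) -cb_shift_out; last by rewrite /n1; lia.
by rewrite IH; congr cb; lia.
Qed.

Lemma ca_above (k : nat) q : ca (n1 + k%:Z) q = ca n1 (q - k%:Z).
Proof.
elim: k q => [|k IH] q; first by rewrite addr0 subr0.
rewrite (_ : n1 + k.+1%:Z = n1 + k%:Z + 1); last lia.
rewrite -ca_shift_out; last by rewrite /n1; lia.
by rewrite IH; congr ca; lia.
Qed.

Lemma cb_band : exists K : nat, forall n p, cb n p != 0 -> - K%:Z <= n + p <= K%:Z.
Proof.
apply: (@band_bounded _ cb n0 n1); first by rewrite /n0 /n1; lia.
- by move=> n; have [] := cb_phis n.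
- exact: cb_below.
- exact: cb_above.
Qed.

Lemma ca_band : exists K : nat, forall n q, ca n q != 0 -> - K%:Z <= n - q <= K%:Z.
Proof.
have [K caK] : exists K : nat, forall n q, ca n (- q) != 0 -> - K%:Z <= n + q <= K%:Z.
  apply: (@band_bounded _ (fun n q => ca n (- q)) n0 n1).
  - by rewrite /n0 /n1; lia.
  - move=> n; have [fin_can _] := ca_phi n.
    apply: sub_finite_set (finite_image (fun q => - q) fin_can) => q /= caq.
    by exists (- q); rewrite ?opprK.
  - by move=> k q /=; rewrite ca_below opprB addrC.
  - by move=> k q /=; rewrite ca_above opprD.
by exists K => n q caq; have := caK n (- q); rewrite opprK => /(_ caq).
Qed.

Definition acoef (p q : int) := \sum_(n \in [set: int]) cb n p * ca n q.

Lemma finite_acoef_supp p q : finite_set ((fun n => cb n p * ca n q) @^-1` [set~ 0]).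
Proof.
have [K cbK] := cb_band.
apply: (@bounded_int_finite _ (- K%:Z - p) (K%:Z - p)) => n /= cbca.
have /cbK : cb n p != 0 by apply/eqP => cb0; apply: cbca; rewrite cb0 mul0r.
lia.
Qed.

Definition tele_term (p q n : int) :=
  (cb n (p - 1) + S n * cb n p) * (ca n q - S n * ca n (q - 1)) / C n ^+ 2.

Lemma tele_termE p q n :
  cb n (p - 1) * ca n q - cb n p * ca n (q - 1) = tele_term p q n - tele_term p q (n + 1).
Proof.
have Cn := Cg_neq0 gamma n; have Cn1 := Cg_neq0 gamma (n + 1).
have cb_next : cb (n + 1) (p - 1) + S (n + 1) * cb (n + 1) p =
    C (n + 1) / C n * (cb n p - S n * cb n (p - 1)).
  apply: (mulfI Cn).
  transitivity (C n * S (n + 1) * cb (n + 1) p + C n * cb (n + 1) (p - 1)); first by ring.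
  by rewrite -cb_step; field.
have ca_next : ca (n + 1) q - S (n + 1) * ca (n + 1) (q - 1) =
    C (n + 1) / C n * (S n * ca n q + ca n (q - 1)).
  apply: (mulfI Cn).
  transitivity (C n * ca (n + 1) q + - (C n * S (n + 1)) * ca (n + 1) (q - 1)); first by ring.
  by rewrite -ca_step; field.
rewrite /tele_term cb_next ca_next; apply/eqP; rewrite -subr_eq0; apply/eqP.
have := Cg_sqr gamma n; move: (S n) (C n) (C (n + 1)) Cn Cn1 => s c c' c0 c'0 c_sqr.
transitivity ((cb n (p - 1) * ca n q - cb n p * ca n (q - 1)) * (c ^+ 2 - (1 + s ^+ 2)) / c ^+ 2).
  by field; rewrite c0 c'0.
by rewrite c_sqr subrr mulr0 mul0r.
Qed.

Lemma acoef_shift p q : acoef (p - 1) q = acoef p (q - 1).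
Proof.
have [K cbK] := cb_band.
have T_out n : (n < - K%:Z - p) || (K%:Z - p + 1 < n) -> tele_term p q n = 0.
  move=> n_out; rewrite /tele_term.
  have [cb1 cb0] : cb n (p - 1) = 0 /\ cb n p = 0.
    by split; apply/eqP; apply: contraLR n_out => /cbK; lia.
  by rewrite cb1 cb0 mulr0 addr0 !mul0r.
have fin_T := bounded_supp_int_finite T_out.
have fin_T1 : finite_set ((fun n => tele_term p q (n + 1)) @^-1` [set~ 0]).
  apply: (@bounded_supp_int_finite _ _ (- K%:Z - p - 1) (K%:Z - p)) => n n_out.
  by apply: T_out; lia.
apply/eqP; rewrite -subr_eq0 /acoef -fsumB; [|exact: finite_acoef_supp..].
under eq_fsbigr do rewrite tele_termE.
by rewrite fsumB // (@fsum_int_shift _ (tele_term p q) 1) subrr.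
Qed.

Lemma acoef_shiftn p q (m : nat) : acoef p q = acoef (p + m%:Z) (q - m%:Z).
Proof.
elim: m => [|m IH]; first by rewrite addr0 subr0.
rewrite IH; have := acoef_shift (p + m%:Z + 1) (q - m%:Z); rewrite addrK => ->.
by congr acoef; lia.
Qed.

Lemma Pprod_below t n : n < - M ->
  Pprod gamma t = rprod (fun j => - S j) (expi (- t)) n * rprod S (expi t) n.
Proof.
move=> nM; rewrite /rprod -fsbig_split_supp; last 2 first.
- exact: (finite_rfac_supp _ (SgN_supp gamma_supp)).
- exact: (finite_rfac_supp _ (Sg_supp gamma_supp)).
rewrite /Pprod -(fsbig_widen [set j : int | n + 1 <= j] setT) // => [|j [_ /= j_out]].
  by apply: eq_fsbigr => j _; rewrite /rfac mulNr opprK.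
have [-> _] : S j = 0 /\ C j = 1 by apply: SCg_out; lia.
by rewrite /preimage /= !mul0r addr0 subr0 mulr1.
Qed.

Lemma phis_phi_coef_below t n : n < - M ->
  phis_coef gamma t n * phi_coef gamma t n = Pprod gamma t.
Proof.
move=> nM; have [_ C1] : S n = 0 /\ C n = 1 by apply: SCg_out; lia.
have wz : expi (- t) ^ n * expi t ^ n = 1.
  by rewrite expiN exprz_inv -exprzDr ?unitfE ?expi_neq0 // addNr.
rewrite phis_coefE phi_coefE /phic (Pprod_below _ nM) C1.
rewrite (lprod_low (expi_neq0 (- t)) (SgN_supp gamma_supp)); last lia.
rewrite (lprod_low (expi_neq0 t) (Sg_supp gamma_supp)); last lia.
move: (expi (- t) ^ n) (expi t ^ n) wz (rprod _ _ n) (rprod _ _ n) => w z wz rw rz.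
transitivity (w * z * (rw * rz)); first by ring.
by rewrite wz mul1r mulrC.
Qed.

Lemma acoef_far p q (K : int) : (forall n q', ca n q' != 0 -> n - q' <= K) ->
  q < n0 - K -> acoef p q = \sum_(r \in [set: int]) cb n0 r * ca n0 (p + q - r).
Proof.
move=> caK qK; have ca0 n q' : K < n - q' -> ca n q' = 0.
  by move=> nqK; apply/eqP; apply: contraLR nqK => /caK; lia.
rewrite /acoef -(@fsum_int_shift _ _ (n0 - p)); apply: eq_fsbigr => r _.
have [rp|pr] := lerP r p; last by rewrite !ca0 ?mulr0 //; lia.
have -> : r + (n0 - p) = n0 - (absz (p - r))%:Z by lia.
by rewrite cb_below ca_below; congr (cb _ _ * ca _ _); lia.
Qed.

Lemma acoefE p q : acoef p q = cP (p + q).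
Proof.
have [K caK] := ca_band.
have caK' n q' : ca n q' != 0 -> n - q' <= K%:Z by move=> /caK; lia.
pose m := absz (q - n0 + K%:Z + 1).
rewrite (acoef_shiftn p q m) (acoef_far _ caK'); last by rewrite /m /n0; lia.
have prodP : (fun t => phis_coef gamma t n0 * phi_coef gamma t n0) = Pprod gamma.
  by apply/funext => t; apply: phis_phi_coef_below; rewrite /n0; lia.
have := trig_coeffs_mul (cb_phis n0) (ca_phi n0); rewrite prodP.
move=> /trig_coeffs_uniq /(_ cP_P) /(congr1 (fun c => c (p + m%:Z + (q - m%:Z)))) ->.
by congr cP; lia.
Qed.

End Anticommutator.

Lemma tp_mul_series_delta (R : realType) (cP : int -> R[i]) (p q : int) :
  tp_mul_series cP (@delta_series R) p q = cP (p + q).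
Proof.
rewrite /tp_mul_series -(fsbig_widen [set p + q] setT) // => [|r [_ /= r_neq]].
  by rewrite fsbig_set1 /delta_series ifT ?mulr1 //; apply/eqP; lia.
by rewrite /preimage /= /delta_series ifF ?mulr0 //; apply/negbTE/eqP; lia.
Qed.

Unset Implicit Arguments.

Theorem propositionF2 (R : realType) (gamma : int -> R) :
  (forall n : int, 0 <= gamma n) ->
  finite_set [set n : int | gamma n != 0] ->
  (forall n : int, sinhR (gamma n) < 1) ->
  (forall theta : R,
     fcomm (calH gamma) (phi gamma theta)
     = fscale (- (expi theta + expi (- theta))) (phi gamma theta)) /\
  (forall theta : R,
     fcomm (calH gamma) (phis gamma theta)
     = fscale (expi theta + expi (- theta)) (phis gamma theta)) /\
  (forall (ca cb : int -> int -> R[i]) (cP : int -> R[i]),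
     (forall n : int, trig_coeffs (ca n) (fun theta => cpsi (phi gamma theta) n)) ->
     (forall n : int, trig_coeffs (cb n) (fun theta => cpsis (phis gamma theta) n)) ->
     trig_coeffs cP (Pprod gamma) ->
     forall p q : int,
       facomm (FLin (fun _ => 0) (fun n => cb n p))
              (FLin (fun n => ca n q) (fun _ => 0))
       = tp_mul_series cP (@delta_series R) p q).
Proof.
move=> _ fin_gamma _; have [N gamma_supp] := finite_int_bounded fin_gamma.
split; first exact: calH_comm_phi gamma_supp.
split; first exact: calH_comm_phis gamma_supp.
move=> ca cb cP ca_phi cb_phis cP_P p q.
rewrite tp_mul_series_delta /facomm /=.
under eq_fsbigr do rewrite mulr0 addr0.
exact: (acoefE (M := N%:Z) _ gamma_supp ca_phi cb_phis cP_P).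
Qed.
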